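(* Let $d,a,b$ be positive integers, $r=(d+2b)/d$, $R=(a+d)/d$, with $R\ge3r$, and let $\rho=x_1-r$ with $x_1$ as in the context. If $t\in\mathbb C$ satisfies $\mathrm{Re}(t)>1$, $\mathrm{Im}(t)\ge0$ and $|t-r|>\rho$, then $\Phi(t)<0$.
   Context: For $t\in\mathbb C\setminus\{\pm1,\pm r\}$ let $\Phi(t)=d\log|t+r|-d\log|t-r|+(a+d)(\log|t-1|-\log|t+1|)$. Under $R\ge3r$ there is a unique $x_1\in(r,\infty)$ with $\Phi(x_1)=0$. *)

(* classical reals. A complex number t is represented by its
   real and imaginary parts (x, y); |t - c| for real c is sqrt((x-c)^2+y^2). *)
From Stdlib Require Import Reals.
Open Scope R_scope.

Definition cmod_shift (x y c : R) : R := sqrt ((x - c) ^ 2 + y ^ 2).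

Definition rr (d b : nat) : R := (INR d + 2 * INR b) / INR d.
Definition RR (d a : nat) : R := (INR a + INR d) / INR d.

Definition Phi (d a b : nat) (x y : R) : R :=
  INR d * ln (cmod_shift x y (- rr d b)) - INR d * ln (cmod_shift x y (rr d b))
  + (INR a + INR d) * (ln (cmod_shift x y 1) - ln (cmod_shift x y (-1))).

(* Put t = x + i y, u = |t - r|^2, v = |t - 1|^2.  Since |t + c|^2 = |t - c|^2 + 4cx,
   2 Phi / d = ln (1 + 4rx/u) - R ln (1 + 4x/v) =: Psi.
   Outside the disc u <= r^2 - 1, Psi < 0 follows from R >= 3r and the bounds
   z/(1+z) <= ln (1+z) <= 2 (sqrt (1+z) - 1).  Inside it, on each circle |t - r| = s
   Psi is largest at the real point r + s, and s > rho puts r + s beyond x1; on the real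
   half-line beyond x1, Psi has no zero and is negative far out, hence is negative. *)

From Stdlib Require Import Reals Lra Psatz Ranalysis5.
Open Scope R_scope.

Lemma ln_le_sub1 (w : R) : 0 < w -> ln w <= w - 1.
Proof. intros Hw. pose proof (exp_ineq1_le (ln w)) as H. rewrite exp_ln in H; lra. Qed.

Lemma ln_le (a b : R) : 0 < a -> a <= b -> ln a <= ln b.
Proof. intros Ha [Hab | ->]; [left; exact (ln_increasing a b Ha Hab) | lra]. Qed.

Lemma ln_div (a b : R) : 0 < a -> 0 < b -> ln (a / b) = ln a - ln b.
Proof. intros Ha Hb. unfold Rdiv. rewrite ln_mult, ln_Rinv; auto with real. Qed.

Lemma ln_sqrt (w : R) : 0 < w -> ln (sqrt w) = ln w / 2.
Proof.
  intros Hw. assert (Hs : 0 < sqrt w) by (apply sqrt_lt_R0; exact Hw).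
  rewrite <- (sqrt_sqrt w) at 2 by lra. rewrite ln_mult by exact Hs. lra.
Qed.

Lemma div_1p_le_ln_1p (z : R) : 0 <= z -> z / (1 + z) <= ln (1 + z).
Proof.
  intros Hz. pose proof (ln_le_sub1 (/ (1 + z)) ltac:(apply Rinv_0_lt_compat; lra)) as H.
  rewrite ln_Rinv in H by lra.
  replace (z / (1 + z)) with (1 - / (1 + z)) by (field; lra). lra.
Qed.

Lemma ln_le_2sqrt_sub1 (w : R) : 0 < w -> ln w <= 2 * (sqrt w - 1).
Proof.
  intros Hw. pose proof (ln_le_sub1 (sqrt w) (sqrt_lt_R0 w Hw)) as H.
  rewrite ln_sqrt in H by exact Hw. lra.
Qed.

Lemma ln_1p_lt_mul (p q c : R) :
  0 <= p -> 0 <= q -> 1 <= c -> p < c * q -> ln (1 + p) < c * ln (1 + q).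
Proof.
  intros Hp Hq Hc Hpq.
  assert (Hratio : ln (1 + p) - ln (1 + q) <= (p - q) / (1 + q)).
  { rewrite <- ln_div by lra.
    pose proof (ln_le_sub1 ((1 + p) / (1 + q)) ltac:(apply Rdiv_lt_0_compat; lra)).
    replace ((p - q) / (1 + q)) with ((1 + p) / (1 + q) - 1) by (field; lra). lra. }
  assert (Hlin : (p - q) / (1 + q) < (c - 1) * (q / (1 + q))).
  { unfold Rdiv. rewrite <- Rmult_assoc.
    apply Rmult_lt_compat_r; [apply Rinv_0_lt_compat |]; lra. }
  pose proof (Rmult_le_compat_l (c - 1) _ _ ltac:(lra) (div_1p_le_ln_1p q Hq)).
  lra.
Qed.

Definition Psi (r Rb x y : R) : R :=
  ln (1 + 4 * r * x / ((x - r) ^ 2 + y ^ 2))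
  - Rb * ln (1 + 4 * x / ((x - 1) ^ 2 + y ^ 2)).

Lemma ln_cmod_shift_ratio (x y c : R) :
  0 <= c * x -> 0 < (x - c) ^ 2 + y ^ 2 ->
  ln (cmod_shift x y (- c)) - ln (cmod_shift x y c)
  = ln (1 + 4 * c * x / ((x - c) ^ 2 + y ^ 2)) / 2.
Proof.
  intros Hcx Hu. unfold cmod_shift.
  rewrite !ln_sqrt by nra.
  replace (1 + 4 * c * x / ((x - c) ^ 2 + y ^ 2))
    with (((x - - c) ^ 2 + y ^ 2) / ((x - c) ^ 2 + y ^ 2)) by (field; lra).
  rewrite ln_div by nra. lra.
Qed.

Lemma rr_gt_1 (d b : nat) : (0 < d)%nat -> (0 < b)%nat -> 1 < rr d b.
Proof.
  intros Hd Hb. apply lt_0_INR in Hd, Hb. unfold rr.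
  apply (Rmult_lt_reg_r (INR d)); [exact Hd |]. field_simplify; lra.
Qed.

Lemma Phi_eq_Psi (d a b : nat) (x y : R) :
  (0 < d)%nat -> 0 < rr d b -> 1 < x -> 0 < (x - rr d b) ^ 2 + y ^ 2 ->
  Phi d a b x y = INR d / 2 * Psi (rr d b) (RR d a) x y.
Proof.
  intros Hd Hr Hx Hu. apply lt_0_INR in Hd.
  assert (HR : INR a + INR d = RR d a * INR d) by (unfold RR; field; lra).
  pose proof (ln_cmod_shift_ratio x y (rr d b) ltac:(nra) Hu) as Er.
  pose proof (ln_cmod_shift_ratio x y 1 ltac:(lra) ltac:(nra)) as E1.
  replace (- (1)) with (-1) in E1 by ring.
  unfold Phi, Psi. rewrite HR.
  replace (4 * x) with (4 * 1 * x) by ring.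
  transitivity (INR d * (ln (cmod_shift x y (- rr d b)) - ln (cmod_shift x y (rr d b)))
    - RR d a * INR d * (ln (cmod_shift x y (-1)) - ln (cmod_shift x y 1))); [ring |].
  rewrite Er, E1. field.
Qed.

Lemma Psi_neg_of_scaled_lt (r Rb x y : R) :
  0 < r -> 1 <= Rb -> 1 < x -> 0 < (x - r) ^ 2 + y ^ 2 ->
  r * ((x - 1) ^ 2 + y ^ 2) < Rb * ((x - r) ^ 2 + y ^ 2) -> Psi r Rb x y < 0.
Proof.
  intros Hr HRb Hx Hu Hlt. unfold Psi.
  set (u := (x - r) ^ 2 + y ^ 2) in *. set (v := (x - 1) ^ 2 + y ^ 2) in *.
  assert (Hv : 0 < v) by (unfold v; nra).
  enough (ln (1 + 4 * r * x / u) < Rb * ln (1 + 4 * x / v)) by lra.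
  apply ln_1p_lt_mul; try lra.
  - apply Rlt_le, Rdiv_lt_0_compat; nra.
  - apply Rlt_le, Rdiv_lt_0_compat; nra.
  - apply (Rmult_lt_reg_r (u * v)); [nra |]. field_simplify; nra.
Qed.

Lemma outside_disc_poly (r x u v : R) :
  1 < r -> 1 < x -> r ^ 2 - 1 <= u -> (x - r) ^ 2 <= u ->
  v = u + (r - 1) * (2 * x - r - 1) -> 3 * u <= v ->
  (v + 4 * x) ^ 2 < 3 * u * (v + 4 * x) + 9 * r * x * u.
Proof.
  intros Hr Hx Hu1 Hu2 -> Hk.
  set (q := x - r).
  assert (Hq : 2 * q >= r + 3) by (unfold q; nra).
  assert (Hq2 : 2 * q ^ 2 <= (r - 1) * (2 * q + r - 1)) by (unfold q in *; nra).
  replace x with (r + q) in * by (unfold q; ring).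
  nra.
Qed.

Lemma Psi_neg_of_scaled_ge (r Rb x y : R) :
  1 < r -> 3 * r <= Rb -> 1 < x -> r ^ 2 - 1 <= (x - r) ^ 2 + y ^ 2 ->
  Rb * ((x - r) ^ 2 + y ^ 2) <= r * ((x - 1) ^ 2 + y ^ 2) -> Psi r Rb x y < 0.
Proof.
  intros Hr HRb Hx Hu Hge. unfold Psi.
  set (u := (x - r) ^ 2 + y ^ 2) in *. set (v := (x - 1) ^ 2 + y ^ 2) in *.
  assert (Hu0 : 0 < u) by nra.
  assert (Hv0 : 0 < v) by (unfold v; nra).
  (* Here 3u <= v; squaring reduces sqrt (1 + 4rx/u) < 1 + 6rx/(v+4x) to [Hpoly]. *)
  assert (Hpoly : (v + 4 * x) ^ 2 < 3 * u * (v + 4 * x) + 9 * r * x * u).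
  { apply outside_disc_poly; try lra.
    - unfold u. nra.
    - unfold u, v. ring.
    - apply (Rmult_le_reg_l r); nra. }
  assert (Hsqrt : sqrt (1 + 4 * r * x / u) < 1 + 6 * r * x / (v + 4 * x)).
  { rewrite <- (sqrt_pow2 (1 + 6 * r * x / (v + 4 * x))) by
      (apply Rlt_le, Rplus_lt_0_compat; [lra | apply Rdiv_lt_0_compat; nra]).
    apply sqrt_lt_1_alt. split.
    - apply Rlt_le, Rplus_lt_0_compat; [lra | apply Rdiv_lt_0_compat; nra].
    - apply (Rmult_lt_reg_r (u * (v + 4 * x) ^ 2)).
      { apply Rmult_lt_0_compat; [lra | apply pow_lt; lra]. }
      pose proof (Rmult_lt_compat_l (4 * r * x) _ _ ltac:(nra) Hpoly).
      field_simplify; [nra | lra | lra]. }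
  assert (HlnP : ln (1 + 4 * r * x / u) < 12 * r * x / (v + 4 * x)).
  { eapply Rle_lt_trans; [apply ln_le_2sqrt_sub1 |].
    - apply Rplus_lt_0_compat; [lra | apply Rdiv_lt_0_compat; nra].
    - replace (12 * r * x / (v + 4 * x)) with (2 * (1 + 6 * r * x / (v + 4 * x) - 1))
        by (field; lra). lra. }
  assert (HlnQ : 4 * x / (v + 4 * x) <= ln (1 + 4 * x / v)).
  { replace (4 * x / (v + 4 * x)) with ((4 * x / v) / (1 + 4 * x / v)) by (field; lra).
    apply div_1p_le_ln_1p, Rlt_le, Rdiv_lt_0_compat; lra. }
  assert (H3r : 12 * r * x / (v + 4 * x) <= Rb * (4 * x / (v + 4 * x))).
  { unfold Rdiv. rewrite <- !Rmult_assoc. apply Rmult_le_compat_r.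
    - apply Rlt_le, Rinv_0_lt_compat; lra.
    - nra. }
  pose proof (Rmult_le_compat_l Rb _ _ ltac:(lra) HlnQ). lra.
Qed.

Lemma Psi_neg_outside_disc (r Rb x y : R) :
  1 < r -> 3 * r <= Rb -> 1 < x -> r ^ 2 - 1 <= (x - r) ^ 2 + y ^ 2 ->
  Psi r Rb x y < 0.
Proof.
  intros Hr HRb Hx Hu.
  destruct (Rlt_or_le (r * ((x - 1) ^ 2 + y ^ 2)) (Rb * ((x - r) ^ 2 + y ^ 2))).
  - apply Psi_neg_of_scaled_lt; nra.
  - apply Psi_neg_of_scaled_ge; assumption.
Qed.

Lemma inside_disc_poly (r x s v : R) :
  s * s <= r ^ 2 - 1 -> x <= r + s -> v = s * s + (r - 1) * (2 * x - r - 1) ->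
  (r + s) * v <= x * (r + s - 1) ^ 2.
Proof.
  intros Hs Hxs ->.
  assert (x * (r + s - 1) ^ 2 - (r + s) * (s * s + (r - 1) * (2 * x - r - 1))
          = (s * s - r * r + 1) * (x - (r + s))) as E by ring.
  nra.
Qed.

Lemma Psi_le_real_on_circle (r Rb x y : R) :
  1 < r -> 0 < Rb -> 1 < x -> 0 < (x - r) ^ 2 + y ^ 2 ->
  (x - r) ^ 2 + y ^ 2 <= r ^ 2 - 1 ->
  Psi r Rb x y <= Psi r Rb (r + sqrt ((x - r) ^ 2 + y ^ 2)) 0.
Proof.
  intros Hr HRb Hx Hu0 Hu. unfold Psi.
  set (u := (x - r) ^ 2 + y ^ 2) in *. set (s := sqrt u).
  assert (Hs0 : 0 < s) by (apply sqrt_lt_R0; exact Hu0).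
  assert (Hss : s * s = u) by (apply sqrt_sqrt; lra).
  replace ((r + s - r) ^ 2 + 0 ^ 2) with u by nra.
  assert (Hxs : x <= r + s).
  { destruct (Rle_or_lt x (r + s)) as [| Hlt]; [assumption |].
    assert (s * s < (x - r) ^ 2) by nra. unfold u in Hss. nra. }
  set (v := (x - 1) ^ 2 + y ^ 2).
  assert (Hv0 : 0 < v) by (unfold v; nra).
  assert (Hv : v = s * s + (r - 1) * (2 * x - r - 1)) by (unfold v; rewrite Hss; unfold u; ring).
  assert (Hfirst : ln (1 + 4 * r * x / u) <= ln (1 + 4 * r * (r + s) / u)).
  { apply ln_le.
    - apply Rplus_lt_le_0_compat; [lra | apply Rlt_le, Rdiv_lt_0_compat; nra].
    - apply Rplus_le_compat_l. unfold Rdiv.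
      apply Rmult_le_compat_r; [left; apply Rinv_0_lt_compat |]; nra. }
  assert (Hsecond : ln (1 + 4 * (r + s) / ((r + s - 1) ^ 2 + 0 ^ 2)) <= ln (1 + 4 * x / v)).
  { apply ln_le.
    - apply Rplus_lt_le_0_compat; [lra | apply Rlt_le, Rdiv_lt_0_compat; nra].
    - apply Rplus_le_compat_l.
      apply (Rmult_le_reg_r (v * ((r + s - 1) ^ 2 + 0 ^ 2))).
      { apply Rmult_lt_0_compat; [lra | nra]. }
      pose proof (inside_disc_poly r x s v ltac:(lra) Hxs Hv).
      field_simplify; nra. }
  pose proof (Rmult_le_compat_l Rb _ _ ltac:(lra) Hsecond). lra.
Qed.

Lemma continuity_pt_ln_comp (g : R -> R) (z : R) :
  continuity_pt g z -> 0 < g z -> continuity_pt (fun t => ln (g t)) z.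
Proof.
  intros Hg Hpos. apply (continuity_pt_comp g ln z Hg).
  apply derivable_continuous_pt. exists (/ g z). apply derivable_pt_lim_ln, Hpos.
Qed.

Lemma continuity_pt_Psi_real (r Rb z : R) :
  1 < r -> r < z -> continuity_pt (fun t => Psi r Rb t 0) z.
Proof.
  intros Hr Hz. unfold Psi.
  apply continuity_pt_minus; [| apply continuity_pt_mult; [apply continuity_pt_const; now intros ? ? |]];
    apply continuity_pt_ln_comp.
  - apply continuity_pt_plus; [apply continuity_pt_const; now intros ? ? |].
    apply continuity_pt_div; [reg | reg | nra].
  - assert (0 < 4 * r * z / ((z - r) ^ 2 + 0 ^ 2)) by (apply Rdiv_lt_0_compat; nra). lra.
  - apply continuity_pt_plus; [apply continuity_pt_const; now intros ? ? |].
    apply continuity_pt_div; [reg | reg | nra].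
  - assert (0 < 4 * z / ((z - 1) ^ 2 + 0 ^ 2)) by (apply Rdiv_lt_0_compat; nra). lra.
Qed.

Lemma neg_of_rootless (g : R -> R) (a c : R) :
  a <= c -> (forall t, a <= t <= c -> continuity_pt g t) ->
  (forall t, a <= t <= c -> g t <> 0) -> g c < 0 -> g a < 0.
Proof.
  intros Hac Hcont Hroot Hc.
  destruct (Rtotal_order (g a) 0) as [Ha | [Ha | Ha]]; [exact Ha | |].
  - exfalso. apply (Hroot a); [lra | exact Ha].
  - destruct (IVT_interv (fun t => - g t) a c) as [z [Hz Hgz]].
    + intros t Ht. apply continuity_pt_opp, Hcont, Ht.
    + destruct Hac as [| ->]; [assumption | lra].
    + lra.
    + lra.
    + exfalso. apply (Hroot z Hz). lra.
Qed.

Lemma Psi_real_neg_beyond_root (r Rb x1 : R) :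
  1 < r -> 3 * r <= Rb -> r < x1 ->
  (forall X, r < X -> Psi r Rb X 0 = 0 -> X = x1) ->
  forall X, x1 < X -> Psi r Rb X 0 < 0.
Proof.
  intros Hr HRb Hx1 Huniq X HX.
  apply (neg_of_rootless (fun t => Psi r Rb t 0) X (X + 2 * r)); [lra | | |].
  - intros t Ht. apply continuity_pt_Psi_real; lra.
  - intros t Ht Hzero. pose proof (Huniq t ltac:(lra) Hzero). lra.
  - apply Psi_neg_outside_disc; nra.
Qed.

Theorem lemma4p12 (d a b : nat) (hd : (0 < d)%nat) (ha : (0 < a)%nat) (hb : (0 < b)%nat)
  (hR : RR d a >= 3 * rr d b)
  (x1 : R) (hx1 : rr d b < x1) (hPhi1 : Phi d a b x1 0 = 0)
  (huniq : forall x, rr d b < x -> Phi d a b x 0 = 0 -> x = x1)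
  (x y : R) (hx : x > 1) (hy : y >= 0)
  (hrho : cmod_shift x y (rr d b) > x1 - rr d b) :
  Phi d a b x y < 0.
Proof.
  pose proof (lt_0_INR d hd) as Hd.
  pose proof (rr_gt_1 d b hd hb) as Hr.
  unfold cmod_shift in hrho.
  set (r := rr d b) in *. set (Rb := RR d a) in *.
  set (u := (x - r) ^ 2 + y ^ 2) in *.
  assert (Hu0 : 0 < u).
  { assert (Hu : 0 <= u) by (unfold u; apply Rplus_le_le_0_compat; apply pow2_ge_0).
    destruct (Rle_lt_or_eq_dec 0 u Hu) as [| Hu0]; [assumption |].
    rewrite <- Hu0, sqrt_0 in hrho. lra. }
  assert (Hreal : forall X, x1 < X -> Psi r Rb X 0 < 0).
  { apply Psi_real_neg_beyond_root; try lra.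
    intros X HX Hzero. apply huniq; [exact HX |].
    rewrite Phi_eq_Psi by (exact hd || (fold r; nra)). fold r Rb. rewrite Hzero. ring. }
  rewrite Phi_eq_Psi by (exact hd || (fold r u; lra)). fold r Rb.
  enough (Psi r Rb x y < 0) by nra.
  destruct (Rle_or_lt (r ^ 2 - 1) u).
  - apply Psi_neg_outside_disc; fold u; lra.
  - eapply Rle_lt_trans; [apply Psi_le_real_on_circle; fold u; lra |].
    apply Hreal. fold u. lra.
Qed.
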